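(* Let $(R,\mathfrak{m})$ be a finite commutative local ring with identity such that $\mathfrak{m}$ is not a principal ideal, and let $I$ be a proper ideal of $R$ (so $I\subseteq\mathfrak m$). If $\Gamma''_I(R)$ is planar, then $\operatorname{ara}(\mathfrak{m}/I)\leq 4$.
   Context: For an ideal $K$ of a finite commutative ring, $\operatorname{ara}(K)$ denotes the smallest of the cardinalities of minimal generating sets of $K$; here $\mathfrak m/I$ is regarded as an ideal of $R/I$. For an ideal $I$ of $R$, $\Gamma''_I(R)$ is the simple undirected graph whose vertex set is $\{x\in R\setminus I : xR+I\neq R\}$, with distinct vertices $x,y$ adjacent if and only if $x\notin yR+I$ and $y\notin xR+I$. A graph is planar if it can be drawn in the plane with edges meeting only at their endpoints. *)

From HB Require Import structures.
From mathcomp Require Import all_boot all_order all_algebra.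
From mathcomp Require Import all_classical all_reals all_analysis.
From mathcomp Require Import Rstruct Rstruct_topology.
From Stdlib Require Rdefinitions.

Set Implicit Arguments.
Unset Strict Implicit.
Unset Printing Implicit Defensive.

Import Order.TTheory GRing.Theory Num.Theory.
Local Open Scope ring_scope.

Section RingIdeals.
Variable R : finComNzRingType.

Definition is_idl (J : {set R}) : Prop :=
  0 \in J /\ (forall x y, x \in J -> y \in J -> x + y \in J) /\
  (forall r x, x \in J -> r * x \in J).

Definition proper_idl (J : {set R}) : Prop := is_idl J /\ J != [set: R]%SET.

Definition local_with_max (m : {set R}) : Prop :=
  proper_idl m /\ forall J, proper_idl J -> J \subset m.

Definition ideal_gen (S : {set R}) : {set R} :=
  [set x | [exists c : {ffun R -> R}, x == \sum_(s in S) c s * s]].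

Definition principal_ideal (J : {set R}) : Prop := exists x : R, J = ideal_gen [set x].

Definition ideal_add (J I : {set R}) : {set R} :=
  [set z | [exists x in J, exists y in I, z == x + y]].

Definition xRI (x : R) (I : {set R}) : {set R} := ideal_add (ideal_gen [set x]) I.

Definition GammaI_vert (I : {set R}) : {set R} :=
  [set x | (x \notin I) && (xRI x I != [set: R]%SET)].

Definition GammaI_adj (I : {set R}) (x y : R) : bool :=
  [&& x \in GammaI_vert I, y \in GammaI_vert I, x != y,
      x \notin xRI y I & y \notin xRI x I].

(* Elements of R/I are modelled as cosets s + I (as subsets of R). *)
Definition cosetI (I : {set R}) (s : R) : {set R} := [set s + i | i in I].

Definition imgI (I S : {set R}) : {set {set R}} := [set cosetI I s | s in S].

(* The images of the elements of S generate the ideal m/I of R/I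
   iff (S) + I = m. *)
Definition gens_mod (I m S : {set R}) : bool := ideal_add (ideal_gen S) I == m.

(* S lifts a minimal generating set of m/I: its image generates m/I and no
   proper subset of the image (= image of a subset T of S) generates m/I. *)
Definition min_gens_mod (I m S : {set R}) : bool :=
  gens_mod I m S &&
  [forall T : {set R}, (T \subset S) && gens_mod I m T ==> (imgI I T == imgI I S)].

(* ara(m/I): the smallest cardinality of a minimal generating set of m/I
   (the default #|R| is never reached, a minimal generating set exists). *)
Definition ara_mod (I m : {set R}) : nat :=
  \big[minn/#|R|]_(S : {set R} | min_gens_mod I m S) #|imgI I S|.

End RingIdeals.

Local Open Scope classical_set_scope.

Definition planar (T : finType) (V : {set T}) (adj : rel T) : Prop :=
  exists (p : T -> Rdefinitions.R * Rdefinitions.R)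
         (arc : T -> T -> Rdefinitions.R -> Rdefinitions.R * Rdefinitions.R),
    {in V &, injective p} /\
    (forall x y, x \in V -> y \in V -> adj x y ->
       [/\ {within `[0%R, 1%R], continuous (arc x y)},
           {in `[0%R, 1%R] &, injective (arc x y)},
           arc x y 0%R = p x, arc x y 1%R = p y &
           forall z t, z \in V -> (0 < t < 1)%R -> arc x y t <> p z]) /\
    (forall x y u v s t, x \in V -> y \in V -> u \in V -> v \in V ->
       adj x y -> adj u v -> (0 < s < 1)%R -> (0 < t < 1)%R ->
       arc x y s = arc u v t -> [set x; y]%SET = [set u; v]%SET).

(* If ara(m/I) were at least 5, a minimal generating set of m/I would have
   five distinct classes; by minimality no lift of one of them lies in the
   ideal generated by another one plus I, so these lifts span a K5 in
   Gamma''_I(R).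

   K5 is not planar. For vertex-disjoint edges ij and kl of a drawing, the map
   (s, t) |-> a_ij(s) - a_kl(t) does not vanish, so its winding number around
   the boundary of the unit square is zero. Counting windings in quarter turns
   along a grid fine enough that neighbouring values never lie in opposite
   quadrants gives the integer identities
     w(ij, k) + w(kl, j) = w(ij, l) + w(kl, i),
   where w(ij, k) is the winding of the edge ij around the vertex k. Moreover
   w(ij, k) = q(j, k) - q(i, k) mod 4, where q(j, k) is the quadrant of
   p_j - p_k, and q(k, j) = q(j, k) + 2 mod 4. Over the fifteen pairs of
   disjoint edges of K5 these constraints have no integer solution. *)

From HB Require Import structures.
From mathcomp Require Import all_boot all_order all_algebra.
From mathcomp Require Import all_classical all_reals all_analysis.
From mathcomp Require Import Rstruct Rstruct_topology.
From mathcomp Require Import lra zify.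

Set Implicit Arguments.
Unset Strict Implicit.
Unset Printing Implicit Defensive.

Import Order.TTheory GRing.Theory Num.Theory numFieldNormedType.Exports.
Local Open Scope ring_scope.

Definition opposite (a b : 'I_4) : bool := val (b - a) == 2%N.

(* Opposite quadrants get the junk value 2: the turning direction is undetermined. *)
Definition quarter_turns (a b : 'I_4) : int :=
  match val (b - a) with 0%N => 0 | 1%N => 1 | 3%N => -1 | _ => 2 end.

Lemma quarter_turns_square (a b c d : 'I_4) :
  pairwise (fun x y => ~~ opposite x y) [:: a; b; c; d] ->
  quarter_turns a b + quarter_turns b c = quarter_turns a d + quarter_turns d c.
Proof. by move: a b c d; do 4!case=> [[|[|[|[|//]]]] ?]. Qed.

Lemma quarter_turns_rot2 (a b : 'I_4) :
  quarter_turns (a + 2) (b + 2) = quarter_turns a b.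
Proof. by move: a b; do 2!case=> [[|[|[|[|//]]]] ?]. Qed.

Lemma quarter_turns_mod4 (a b : 'I_4) :
  (quarter_turns a b == b%:Z - a%:Z %[mod 4])%Z.
Proof. by move: a b; do 2!case=> [[|[|[|[|//]]]] ?]. Qed.

Definition winding (a : nat -> 'I_4) (N : nat) : int :=
  \sum_(n < N) quarter_turns (a n) (a n.+1).

Lemma winding_mod4 a N : (winding a N == (a N)%:Z - (a 0%N)%:Z %[mod 4])%Z.
Proof.
elim: N => [|N IH]; first by rewrite /winding big_ord0 subrr.
have := quarter_turns_mod4 (a N) (a N.+1); move: IH.
rewrite /winding big_ord_recr /=; set s := \sum_(n < N) _; lia.
Qed.

Lemma winding_rot2 a N : winding (fun n => a n + 2) N = winding a N.
Proof. by apply: eq_bigr => n _; rewrite quarter_turns_rot2. Qed.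

Lemma winding_square_boundary (a : nat -> nat -> 'I_4) N :
  (forall i j, (i < N)%N -> (j < N)%N ->
     pairwise (fun x y => ~~ opposite x y) [:: a i j; a i.+1 j; a i.+1 j.+1; a i j.+1]) ->
  winding (a^~ 0%N) N + winding (a N) N = winding (a^~ N) N + winding (a 0%N) N.
Proof.
move=> cell_ok.
pose h i j := quarter_turns (a i j) (a i.+1 j).
pose v i j := quarter_turns (a i j) (a i j.+1).
have cell i j : (i < N)%N -> (j < N)%N -> h i j + v i.+1 j = v i j + h i j.+1.
  by move=> iN jN; apply: quarter_turns_square; exact: cell_ok.
have row j : (j < N)%N -> forall n, (n <= N)%N ->
    \sum_(i < n) h i j - \sum_(i < n) h i j.+1 = v 0%N j - v n j.
  move=> jN; elim=> [|n IH] nN; first by rewrite !big_ord0 !subrr.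
  have := IH (ltnW nN); have := cell n j nN jN; rewrite !big_ord_recr /=.
  set s := \sum_(i < n) h i j; set s' := \sum_(i < n) h i j.+1; lia.
have col m : (m <= N)%N ->
    \sum_(i < N) h i 0%N - \sum_(i < N) h i m = \sum_(j < m) v 0%N j - \sum_(j < m) v N j.
  elim: m => [|m IH] mN; first by rewrite !big_ord0 !subrr.
  have := IH (ltnW mN); have := row m mN N (leqnn N); rewrite !big_ord_recr /=.
  set s := \sum_(j < m) v 0%N j; set s' := \sum_(j < m) v N j; lia.
have := col N (leqnn N); rewrite /winding /h /v /=; lia.
Qed.

Section Quadrants.
Variable R : realFieldType.
Implicit Types u v w : R * R.

Definition quadrant w : 'I_4 :=
  inord (if (0 < w.1) && (0 <= w.2) then 0%N
         else if (w.1 <= 0) && (0 < w.2) then 1%N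
         else if (w.1 < 0) && (w.2 <= 0) then 2%N else 3%N).

Variant quadrant_spec w : 'I_4 -> Prop :=
  | Quadrant0 of 0 < w.1 & 0 <= w.2 : quadrant_spec w (inord 0)
  | Quadrant1 of w.1 <= 0 & 0 < w.2 : quadrant_spec w (inord 1)
  | Quadrant2 of w.1 < 0 & w.2 <= 0 : quadrant_spec w (inord 2)
  | Quadrant3 of 0 <= w.1 & w.2 < 0 : quadrant_spec w (inord 3)
  | QuadrantOrigin of w.1 = 0 & w.2 = 0 : quadrant_spec w (inord 3).

Lemma quadrantP w : quadrant_spec w (quadrant w).
Proof.
rewrite /quadrant; case: ifP => [/andP[] | h0]; first exact: Quadrant0.
case: ifP => [/andP[] | h1]; first exact: Quadrant1.
case: ifP => [/andP[] | h2]; first exact: Quadrant2.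
move: h0 h1 h2 => /negbT + /negbT + /negbT; rewrite !negb_and -!ltNge -!leNgt.
have [b_lt0 _ _ /orP[a_ge0|] |b_ge0] := ltP w.2 0; first exact: Quadrant3.
  by move=> ?; exfalso; lra.
by move=> /orP[] ? /orP[] ? /orP[] ?; first [by apply: QuadrantOrigin; lra | exfalso; lra].
Qed.

Definition dotp u v : R := u.1 * v.1 + u.2 * v.2.

Lemma dotp_ge0 w : 0 <= dotp w w.
Proof. by rewrite /dotp addr_ge0 // -expr2 sqr_ge0. Qed.

Lemma dotp_gt0 w : w != 0 -> 0 < dotp w w.
Proof.
case: w => a b; rewrite -pair_eqE /= negb_and !neq_lt /dotp /=.
by move=> /or3P[/orP[] | |] ?; nra.
Qed.

Lemma quadrantN w : w != 0 -> quadrant (- w) = quadrant w + 2.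
Proof.
case: w => a b; rewrite -pair_eqE /= negb_and !neq_lt => ab_neq0.
apply: val_inj; case: quadrantP => /= h1 h2; case: quadrantP => /= h3 h4;
  rewrite !inordK //; exfalso; move: ab_neq0 => /or3P[/orP[] | |] ?; lra.
Qed.

Lemma dotp_gt0_not_opposite u v : 0 < dotp u v -> ~~ opposite (quadrant u) (quadrant v).
Proof.
rewrite /dotp => dot_gt0; apply/negP.
case: quadrantP => h1 h2; case: quadrantP => h3 h4; rewrite /opposite /= !inordK //; nra.
Qed.

End Quadrants.

Section ArcPairs.
Variable R : realType.
Local Open Scope classical_set_scope.

Definition clamp01 (s : R) : R := Num.max 0 (Num.min 1 s).

Lemma clamp01_itv s : `[0, 1] (clamp01 s).
Proof.
rewrite /= in_itv /= /clamp01 le_max lexx /=.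
by rewrite ge_max ler01 ge_min lexx.
Qed.

Lemma clamp01_id s : 0 <= s <= 1 -> clamp01 s = s.
Proof. by case/andP=> s_ge0 s_le1; rewrite /clamp01 (min_r s_le1) (max_r s_ge0). Qed.

Lemma continuous_clamp01 : continuous clamp01.
Proof.
move=> s; apply: continuous_max; first exact: cvg_cst.
by apply: continuous_min; [exact: cvg_cst | exact: cvg_id].
Qed.

Lemma continuous_comp_clamp01 (X : topologicalType) (e : R -> X) :
  {within `[0, 1], continuous e} -> continuous (e \o clamp01).
Proof.
move=> /subspace_continuousP e_cont s.
apply: cvg_comp (e_cont _ (clamp01_itv s)) => W /= eW.
have : nbhs s (fun t => `[0, 1] (clamp01 t) -> W (clamp01 t)) := continuous_clamp01 eW.
by apply: filterS => t; apply; exact: clamp01_itv.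
Qed.

Lemma continuous_fst {U V : topologicalType} : continuous (@fst U V).
Proof. by move=> ?; exact: cvg_fst. Qed.

Lemma continuous_snd {U V : topologicalType} : continuous (@snd U V).
Proof. by move=> ?; exact: cvg_snd. Qed.

Lemma continuous_dotp (T : topologicalType) (f g : T -> R * R) :
  continuous f -> continuous g -> continuous (fun x => dotp (f x) (g x)).
Proof.
move=> f_cont g_cont x; rewrite /dotp.
apply: cvgD; apply: cvgM.
- exact: cvg_comp (f_cont x) cvg_fst.
- exact: cvg_comp (g_cont x) cvg_fst.
- exact: cvg_comp (f_cont x) cvg_snd.
- exact: cvg_comp (g_cont x) cvg_snd.
Qed.

Let square : set (R * R) := `[0, 1] `*` `[0, 1].

Lemma dotp_gt0_near_on_square (G : R * R -> R * R) :
  continuous G -> (forall z, square z -> G z != 0) ->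
  exists2 mu : R, 0 < mu & forall z z', square z -> square z' ->
    dotp (z - z') (z - z') < mu -> 0 < dotp (G z) (G z').
Proof.
move=> G_cont G_neq0.
pose D (zz : (R * R) * (R * R)) := dotp (G zz.1) (G zz.2).
(* [psi] is positive on the compact set [square `*` square] and equals the
   squared distance wherever [D <= 0], so its minimum works as [mu]. *)
pose psi zz := dotp (zz.1 - zz.2) (zz.1 - zz.2) + (`|D zz| + D zz).
have psi_cont : continuous psi.
  have diff_cont : continuous (fun zz : (R * R) * (R * R) => zz.1 - zz.2).
    by move=> zz; apply: cvgB; [exact: continuous_fst | exact: continuous_snd].
  have D_cont : continuous D.
    by apply: continuous_dotp => zz; apply: continuous_comp;
      [exact: continuous_fst | exact: G_cont | exact: continuous_snd | exact: G_cont].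
  move=> zz; apply: cvgD; first exact: (continuous_dotp diff_cont diff_cont).
  by apply: cvgD; [apply: cvg_norm|]; exact: D_cont.
have K_compact : compact (square `*` square).
  by apply: compact_setX; apply: compact_setX; exact: segment_compact.
have K_nonempty : (square `*` square) !=set0.
  by exists ((0, 0), (0, 0)); rewrite /square /= !in_itv /= lexx ler01.
have [c cK c_min] :=
  compact_EVT_min K_nonempty K_compact (continuous_subspaceT psi_cont).
have D_norm_ge0 zz : 0 <= `|D zz| + D zz.
  by have := ler_norm (- D zz); rewrite normrN; lra.
exists (psi c).
  move: cK; rewrite in_setE => -[c1S _].
  have := dotp_ge0 (c.1 - c.2); have := D_norm_ge0 c; rewrite /psi.
  have [c_eq|c_neq] := eqVneq c.1 c.2.
    have D_gt0 : 0 < D c by rewrite /D -c_eq; apply/dotp_gt0/G_neq0.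
    by rewrite gtr0_norm //; lra.
  have /dotp_gt0 : c.1 - c.2 != 0 by rewrite subr_eq0.
  lra.
move=> z z' zS z'S close; rewrite ltNge; apply/negP => D_le0.
have := c_min (z, z'); rewrite in_setE => /(_ (conj zS z'S)).
suff -> : psi (z, z') = dotp (z - z') (z - z') by lra.
by rewrite /psi /D /= ler0_norm // addNr addr0.
Qed.

Definition sampled_winding (g : R -> R * R) (p : R * R) (N : nat) : int :=
  winding (fun n => quadrant (g (n%:R / N%:R) - p)) N.

Lemma sampled_windingN (g : R -> R * R) (p : R * R) N :
  (forall n, (n <= N)%N -> g (n%:R / N%:R) != p) ->
  winding (fun n => quadrant (p - g (n%:R / N%:R))) N = sampled_winding g p N.
Proof.
move=> g_neq_p; rewrite /sampled_winding -winding_rot2; apply: eq_bigr => n _.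
by rewrite -!quadrantN ?opprB // subr_eq0 eq_sym g_neq_p // ltnW.
Qed.

Definition grid_point (N n m : nat) : R * R := (n%:R / N%:R, m%:R / N%:R).

Lemma near_grid_dotp_gt0 (G : R * R -> R * R) :
  continuous G -> (forall z, square z -> G z != 0) ->
  \forall N \near \oo, forall n m n' m' : nat,
    (n <= N)%N -> (m <= N)%N -> (n' <= N)%N -> (m' <= N)%N ->
    (n' <= n.+1)%N -> (n <= n'.+1)%N -> (m' <= m.+1)%N -> (m <= m'.+1)%N ->
    0 < dotp (G (grid_point N n m)) (G (grid_point N n' m')).
Proof.
move=> G_cont G_neq0; have [mu mu_gt0 G_near] := dotp_gt0_near_on_square G_cont G_neq0.
exists (Num.truncn (2 / mu)).+1 => // N /= N_large n m n' m' nN mN n'N m'N n'_le n_le m'_le m_le.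
have N_gt0 : (0 < N)%N by apply: leq_trans N_large.
have Nr_gt0 : 0 < N%:R :> R by rewrite ltr0n.
have inv_le1 : N%:R^-1 <= 1 :> R by rewrite invr_le1 ?unitfE ?gt_eqF // ler1n.
have inv_gt0 : 0 < N%:R^-1 :> R by rewrite invr_gt0.
have two_inv_lt_mu : 2 * N%:R^-1 < mu.
  have : 2 / mu < N%:R by apply: lt_le_trans (truncnS_gt _) _; rewrite ler_nat.
  rewrite ltr_pdivrMr // => two_lt.
  have : N%:R * N%:R^-1 = 1 :> R by rewrite mulfV // gt_eqF.
  nra.
have in_square k l : (k <= N)%N -> (l <= N)%N -> square (grid_point N k l).
  move=> kN lN; rewrite /square /grid_point /= !in_itv /=.
  by rewrite !divr_ge0 ?ler0n //= !ler_pdivrMr // !mul1r !ler_nat kN lN.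
have sqr_diff_le k k' : (k' <= k.+1)%N -> (k <= k'.+1)%N ->
    (k%:R / N%:R - k'%:R / N%:R) * (k%:R / N%:R - k'%:R / N%:R) <= N%:R^-1 :> R.
  move=> k'_le k_le; rewrite -mulrBl mulrACA.
  have d_sqr_le1 : (k%:R - k'%:R) * (k%:R - k'%:R) <= 1 :> R.
    have : k'%:R <= k%:R + 1 :> R by rewrite natr1 ler_nat.
    have : k%:R <= k'%:R + 1 :> R by rewrite natr1 ler_nat.
    nra.
  apply: le_trans (_ : N%:R^-1 * N%:R^-1 <= _); last by rewrite ler_piMl // ltW.
  by rewrite ler_piMl // mulr_ge0 // ltW.
apply: G_near; [exact: in_square | exact: in_square |].
have := sqr_diff_le n n' n'_le n_le; have := sqr_diff_le m m' m'_le m_le.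
rewrite /dotp /grid_point /=; lra.
Qed.

Lemma sampled_winding_disjoint_arcs (al be : R -> R * R) :
  continuous al -> continuous be ->
  (forall s t, 0 <= s <= 1 -> 0 <= t <= 1 -> al s != be t) ->
  \forall N \near \oo,
    sampled_winding al (be 0) N + sampled_winding be (al 1) N =
    sampled_winding al (be 1) N + sampled_winding be (al 0) N.
Proof.
move=> al_cont be_cont al_neq_be.
pose G z := al z.1 - be z.2.
have G_cont : continuous G.
  by move=> z; apply: cvgB; apply: continuous_comp;
    [exact: continuous_fst | exact: al_cont | exact: continuous_snd | exact: be_cont].
have G_neq0 z : square z -> G z != 0.
  case: z => s t [/= s01 t01]; rewrite subr_eq0.
  by apply: al_neq_be; [move: s01 | move: t01]; rewrite in_itv.
apply: filterS2 (near_grid_dotp_gt0 G_cont G_neq0) (_ : \forall N \near \oo, (0 < N)%N);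
  last by exists 1%N.
move=> N grid_ok N_gt0.
have N_neq0 : N%:R != 0 :> R by rewrite pnatr_eq0 -lt0n.
have frac01 k : (k <= N)%N -> 0 <= (k%:R / N%:R : R) <= 1.
  by move=> kN; rewrite divr_ge0 ?ler0n //= ler_pdivrMr ?ltr0n // mul1r ler_nat.
pose a n m := quadrant (G (grid_point N n m)).
have boundary : winding (a^~ 0%N) N + winding (a N) N = winding (a^~ N) N + winding (a 0%N) N.
  apply: winding_square_boundary => i j iN jN; rewrite /= !andbT.
  apply/and3P; split; [apply/and3P; split | apply/andP; split |];
    apply: dotp_gt0_not_opposite; apply: grid_ok; lia.
have be_neq_al s m : (m <= N)%N -> 0 <= s <= 1 -> be (m%:R / N%:R) != al s.
  by move=> mN s01; rewrite eq_sym al_neq_be ?frac01.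
move: boundary; rewrite /a /G /grid_point /= mul0r divff //.
by rewrite !sampled_windingN // => m mN; apply: be_neq_al; rewrite ?lexx ?ler01.
Qed.

End ArcPairs.

Lemma foldr_and_all (X : Type) (b : pred X) (P : X -> Prop) (s : seq X) :
  (forall x, b x -> P x) -> all b s -> foldr (fun x acc => P x /\ acc) True s.
Proof. by move=> bP; elim: s => //= x s IH /andP[/bP Px /IH]. Qed.

Lemma K5_windings_inconsistent (w : 'I_5 -> 'I_5 -> 'I_5 -> int) (q : 'I_5 -> 'I_5 -> 'I_4) :
  (forall i j k l, uniq [:: i; j; k; l] -> w i j k + w k l j = w i j l + w k l i) ->
  (forall i j k, uniq [:: i; j; k] -> (w i j k == (q j k)%:Z - (q i k)%:Z %[mod 4])%Z) ->
  (forall j k, j != k -> q k j = q j k + 2) -> False.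
Proof.
move=> w_square w_mod4 q_opp.
have := foldr_and_all (b := fun '(i, j, k, l) => uniq [:: i; j; k; l])
  (P := fun '(i, j, k, l) => w i j k + w k l j = w i j l + w k l i)
  (fun '(i, j, k, l) => w_square i j k l)
  (s := [:: (0,1,2,3); (0,1,2,4); (0,1,3,4); (0,2,1,3); (0,2,1,4); (0,2,3,4); (0,3,1,2);
           (0,3,1,4); (0,3,2,4); (0,4,1,2); (0,4,1,3); (0,4,2,3); (1,2,3,4); (1,3,2,4);
           (1,4,2,3) : 'I_5 * 'I_5 * 'I_5 * 'I_5]) isT.
have := foldr_and_all (b := fun '(i, j, k) => uniq [:: i; j; k])
  (P := fun '(i, j, k) => (w i j k == (q j k)%:Z - (q i k)%:Z %[mod 4])%Z)
  (fun '(i, j, k) => w_mod4 i j k)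
  (s := [:: (0,1,2); (0,1,3); (0,1,4); (0,2,1); (0,2,3); (0,2,4); (0,3,1); (0,3,2);
           (0,3,4); (0,4,1); (0,4,2); (0,4,3); (1,2,0); (1,2,3); (1,2,4); (1,3,0);
           (1,3,2); (1,3,4); (1,4,0); (1,4,2); (1,4,3); (2,3,0); (2,3,1); (2,3,4);
           (2,4,0); (2,4,1); (2,4,3); (3,4,0); (3,4,1); (3,4,2) : 'I_5 * 'I_5 * 'I_5]) isT.
have := foldr_and_all (b := fun '(j, k) => j != k)
  (P := fun '(j, k) => (q k j : nat) = ((q j k + 2) %% 4)%N)
  (fun '(j, k) jk => congr1 val (q_opp j k jk))
  (s := [:: (0,1); (0,2); (0,3); (0,4); (1,2); (1,3); (1,4); (2,3); (2,4); (3,4)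
         : 'I_5 * 'I_5]) isT.
by move=> /= *; intuition lia.
Qed.

Section K5Drawing.
Local Open Scope classical_set_scope.
Variable R : realType.
Variables (P : 'I_5 -> R * R) (al : 'I_5 -> 'I_5 -> R -> R * R).
Hypotheses (P_inj : injective P)
  (al_cont : forall i j, i != j -> continuous (al i j))
  (al0 : forall i j, i != j -> al i j 0 = P i)
  (al1 : forall i j, i != j -> al i j 1 = P j)
  (al_disjoint : forall i j k l, uniq [:: i; j; k; l] ->
     forall s t, 0 <= s <= 1 -> 0 <= t <= 1 -> al i j s != al k l t).

Lemma K5_no_disjoint_drawing : False.
Proof.
pose w N i j k := sampled_winding (al i j) (P k) N.
have w_square_near : \forall N \near \oo, forall x : 'I_5 * 'I_5 * 'I_5 * 'I_5,
    let: (i, j, k, l) := x in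
    uniq [:: i; j; k; l] -> w N i j k + w N k l j = w N i j l + w N k l i.
  apply: filter_forall => -[[[i j] k] l].
  have [ijkl_uniq|] := boolP (uniq [:: i; j; k; l]); last by move=> ?; apply: nearW.
  move: (ijkl_uniq) => /and4P[]; rewrite !inE !negb_or => /and3P[ij _ _] _ kl _.
  apply: filterS (sampled_winding_disjoint_arcs (al_cont ij) (al_cont kl)
    (al_disjoint ijkl_uniq)) => N.
  by rewrite /w !al0 ?al1.
have [N0 _ /(_ N0.+1 (leqnSn N0)) w_square] := w_square_near.
have N_neq0 : N0.+1%:R != 0 :> R by rewrite pnatr_eq0.
apply: (@K5_windings_inconsistent (w N0.+1) (fun j k => quadrant (P j - P k))).
- by move=> i j k l; apply: (w_square (i, j, k, l)).
- move=> i j k /and3P[]; rewrite !inE !negb_or => /andP[ij _] _ _.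
  by have := winding_mod4 (fun n => quadrant (al i j (n%:R / N0.+1%:R) - P k)) N0.+1;
    rewrite /= divff // mul0r al0 // al1.
- by move=> j k jk; rewrite -opprB quadrantN // subr_eq0 (inj_eq P_inj).
Qed.

End K5Drawing.

Lemma card_geq_inj_ord (T : finType) (K : {set T}) n : (n <= #|K|)%N ->
  exists2 v : 'I_n -> T, injective v & forall i, v i \in K.
Proof.
move=> n_le; exists (fun i => enum_val (widen_ord n_le i)) => [i j|i]; last exact: enum_valP.
by move=> /enum_val_inj /(congr1 val) /= /val_inj.
Qed.

Lemma planar_clique_lt5 (T : finType) (V : {set T}) (adj : rel T) (K : {set T}) :
  planar V adj -> K \subset V -> {in K &, forall x y, x != y -> adj x y} -> (#|K| < 5)%N.
Proof.
move=> [p [arc [p_inj [arc_ok arcs_meet]]]] KV K_clique.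
rewrite ltnNge; apply/negP => /card_geq_inj_ord[v v_inj vK].
have vV i : v i \in V by apply: (fintype.subsetP KV).
have v_adj i j : i != j -> adj (v i) (v j).
  by move=> ij; apply: K_clique; rewrite ?(inj_eq v_inj).
pose P i := p (v i).
pose al i j s := arc (v i) (v j) (clamp01 s).
have P_inj : injective P by move=> i j /p_inj => /(_ (vV i) (vV j)) /v_inj.
have edge_ok i j (ij : i != j) := arc_ok _ _ (vV i) (vV j) (v_adj i j ij).
have al0 i j : i != j -> al i j 0 = P i.
  by move=> ij; rewrite /al /= clamp01_id ?lexx ?ler01 //; case: (edge_ok i j ij).
have al1 i j : i != j -> al i j 1 = P j.
  by move=> ij; rewrite /al /= clamp01_id ?lexx ?ler01 //; case: (edge_ok i j ij).
have al_interior i j s k : i != j -> 0 < s < 1 -> al i j s != P k.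
  move=> ij s_in; have /andP[s_gt0 s_lt1] := s_in.
  rewrite /al clamp01_id; last by rewrite (ltW s_gt0) (ltW s_lt1).
  by case: (edge_ok i j ij) => _ _ _ _ /(_ (v k) s (vV k) s_in) /eqP.
have al_point i j s : i != j -> 0 <= s <= 1 ->
    (exists2 z, z \in [:: i; j] & al i j s = P z) \/ 0 < s < 1.
  move=> ij /andP[s_ge0 s_le1].
  have [->|s_neq0] := eqVneq s 0; first by left; exists i; rewrite ?al0 ?inE ?eqxx.
  have [->|s_neq1] := eqVneq s 1; first by left; exists j; rewrite ?al1 ?inE ?eqxx ?orbT.
  by right; rewrite !lt_neqAle s_ge0 s_le1 eq_sym s_neq0 s_neq1.
apply: (@K5_no_disjoint_drawing _ P al P_inj) => // [i j ij|i j k l ijkl s t s01 t01].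
  by apply: continuous_comp_clamp01; case: (edge_ok i j ij).
move: (ijkl) => /and4P[]; rewrite !inE !negb_or => /and3P[ij ik il] /andP[jk jl] kl _.
have [[z zij ->]|s_in] := al_point i j s ij s01;
  have [[z' zkl ->]|t_in] := al_point k l t kl t01.
- rewrite (inj_eq P_inj); move: zij zkl; rewrite !inE.
  by move=> /orP[]/eqP-> /orP[]/eqP->.
- by rewrite eq_sym al_interior.
- by rewrite al_interior.
rewrite /al !clamp01_id //; apply/eqP.
move=> /(arcs_meet _ _ _ _ _ _ (vV i) (vV j) (vV k) (vV l)
          (v_adj i j ij) (v_adj k l kl) s_in t_in) same_ends.
have := finset.set21 (v i) (v j).
by rewrite same_ends !finset.inE !(inj_eq v_inj) (negbTE ik) (negbTE il).
Qed.

Section IdealsModulo.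
Variable R : finComNzRingType.
Implicit Types (S J I : {set R}) (x : R).
Local Notation subsetP := fintype.subsetP.
Local Notation inE := finset.inE.

Lemma is_idl0 J : is_idl J -> 0 \in J.
Proof. by case. Qed.

Lemma is_idlD J x y : is_idl J -> x \in J -> y \in J -> x + y \in J.
Proof. by case=> _ [+ _]; apply. Qed.

Lemma is_idlM J r x : is_idl J -> x \in J -> r * x \in J.
Proof. by case=> _ [_]; apply. Qed.

Lemma is_idl_sum J (A : {set R}) (F : R -> R) :
  is_idl J -> (forall s, s \in A -> F s \in J) -> \sum_(s in A) F s \in J.
Proof.
move=> J_idl F_J; apply: (big_ind (fun x => x \in J)) => //; first exact: is_idl0.
by move=> x y; apply: is_idlD.
Qed.

Lemma ideal_gen_idl S : is_idl (ideal_gen S).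
Proof.
split.
  rewrite inE; apply/existsP; exists [ffun=> 0].
  by rewrite big1 // => s _; rewrite ffunE mul0r.
split.
  move=> x y; rewrite !inE => /existsP[c /eqP ->] /existsP[d /eqP ->].
  apply/existsP; exists [ffun s => c s + d s]; rewrite -big_split /=.
  by apply/eqP; apply: eq_bigr => s _; rewrite ffunE mulrDl.
move=> r x; rewrite !inE => /existsP[c /eqP ->].
apply/existsP; exists [ffun s => r * c s]; rewrite big_distrr /=.
by apply/eqP; apply: eq_bigr => s _; rewrite ffunE mulrA.
Qed.

Lemma sub_ideal_gen S : S \subset ideal_gen S.
Proof.
apply/subsetP => s sS; rewrite inE; apply/existsP.
exists [ffun t => if t == s then 1 else 0]; apply/eqP.
rewrite (bigD1 s) //= ffunE eqxx mul1r big1 ?addr0 // => t /andP[_ ts].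
by rewrite ffunE (negbTE ts) mul0r.
Qed.

Lemma ideal_gen_min S J : is_idl J -> S \subset J -> ideal_gen S \subset J.
Proof.
move=> J_idl /subsetP SJ; apply/subsetP => x; rewrite inE => /existsP[c /eqP ->].
by apply: is_idl_sum => // s sS; apply: is_idlM => //; apply: SJ.
Qed.

Lemma ideal_genS S S' : S \subset S' -> ideal_gen S \subset ideal_gen S'.
Proof.
move=> SS'; apply: ideal_gen_min; first exact: ideal_gen_idl.
exact: fintype.subset_trans SS' (sub_ideal_gen S').
Qed.

Lemma ideal_add_idl J I : is_idl J -> is_idl I -> is_idl (ideal_add J I).
Proof.
move=> J_idl I_idl; split.
  rewrite inE; apply/exists_inP; exists 0; first exact: is_idl0.
  by apply/exists_inP; exists 0; [exact: is_idl0 | rewrite addr0].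
split.
  move=> x y; rewrite !inE => /exists_inP[a aJ /exists_inP[b bI /eqP ->]].
  move=> /exists_inP[a' a'J /exists_inP[b' b'I /eqP ->]].
  apply/exists_inP; exists (a + a'); first exact: is_idlD.
  apply/exists_inP; exists (b + b'); first exact: is_idlD.
  by rewrite addrACA.
move=> r x; rewrite !inE => /exists_inP[a aJ /exists_inP[b bI /eqP ->]].
apply/exists_inP; exists (r * a); first exact: is_idlM.
apply/exists_inP; exists (r * b); first exact: is_idlM.
by rewrite mulrDr.
Qed.

Lemma ideal_addSl J J' I : J \subset J' -> ideal_add J I \subset ideal_add J' I.
Proof.
move=> /subsetP JJ'; apply/subsetP => x; rewrite !inE => /exists_inP[a aJ aI].
by apply/exists_inP; exists a => //; apply: JJ'.
Qed.

Lemma sub_ideal_addl J I : is_idl I -> J \subset ideal_add J I.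
Proof.
move=> I_idl; apply/subsetP => x xJ; rewrite inE; apply/exists_inP; exists x => //.
by apply/exists_inP; exists 0; rewrite ?is_idl0 // addr0.
Qed.

Lemma sub_ideal_addr J I : is_idl J -> I \subset ideal_add J I.
Proof.
move=> J_idl; apply/subsetP => x xI; rewrite inE; apply/exists_inP; exists 0.
  exact: is_idl0.
by apply/exists_inP; exists x; rewrite // add0r.
Qed.

Lemma ideal_add_min J I K : is_idl K -> J \subset K -> I \subset K -> ideal_add J I \subset K.
Proof.
move=> K_idl /subsetP JK /subsetP IK; apply/subsetP => x; rewrite inE.
by move=> /exists_inP[a aJ /exists_inP[b bI /eqP ->]]; apply: is_idlD; [|apply: JK|apply: IK].
Qed.

Lemma mem_cosetI I s : is_idl I -> s \in cosetI I s.
Proof. by move=> I_idl; apply/imsetP; exists 0; rewrite ?is_idl0 ?addr0. Qed.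

End IdealsModulo.

Section MinimalGenerators.
Variable R : finComNzRingType.
Variables I m : {set R}.
Hypotheses (I_idl : is_idl I) (m_idl : is_idl m) (Im : I \subset m).
Local Notation subsetP := fintype.subsetP.
Local Notation inE := finset.inE.
Local Notation eqEsubset := finset.eqEsubset.

Lemma ara_mod_le S : min_gens_mod I m S -> (ara_mod I m <= #|imgI I S|)%N.
Proof.
by move=> S_min; rewrite /ara_mod -minEnat; exact: (bigmin_le_cond _ (fun S => #|imgI I S|) S_min).
Qed.

Lemma exists_min_gens_mod : exists S, min_gens_mod I m S.
Proof.
have m_gens : gens_mod I m m.
  rewrite /gens_mod eqEsubset ideal_add_min ?ideal_gen_min //=.
  exact: fintype.subset_trans (sub_ideal_gen m) (sub_ideal_addl _ I_idl).
case: (arg_minnP (fun S => #|imgI I S|) m_gens) => S S_gens S_least.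
exists S; rewrite /min_gens_mod S_gens; apply/forallP => T; apply/implyP => /andP[TS T_gens].
by rewrite eqEcard imsetS //= S_least.
Qed.

Variable S : {set R}.
Hypothesis S_min : min_gens_mod I m S.

Lemma min_gens_mod_sub : S \subset m.
Proof.
case/andP: S_min => /eqP <- _.
exact: fintype.subset_trans (sub_ideal_gen S) (sub_ideal_addl _ I_idl).
Qed.

Lemma min_gens_mod_irredundant a : a \in S ->
  a \notin ideal_add (ideal_gen [set s in S | cosetI I s != cosetI I a]) I.
Proof.
move=> aS; apply/negP => aJ.
set T := [set s in S | _] in aJ; set J := ideal_add _ I in aJ.
have J_idl : is_idl J := ideal_add_idl (ideal_gen_idl T) I_idl.
case/andP: S_min => /eqP S_gens /forallP/(_ T)/implyP S_least.
have TS : T \subset S by apply/subsetP => s; rewrite inE => /andP[].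
have T_gens : gens_mod I m T.
  rewrite /gens_mod eqEsubset -S_gens ideal_addSl ?ideal_genS //=.
  apply: ideal_add_min => //; last exact: sub_ideal_addr (ideal_gen_idl T).
  apply: ideal_gen_min => //; apply/subsetP => s sS.
  have [s_a|s_not_a] := eqVneq (cosetI I s) (cosetI I a).
    have /imsetP[i iI ->] : s \in cosetI I a by rewrite -s_a mem_cosetI.
    by apply: is_idlD => //; apply: (subsetP (sub_ideal_addr _ (ideal_gen_idl T))).
  apply: (subsetP (sub_ideal_addl _ I_idl)); apply: (subsetP (sub_ideal_gen T)).
  by rewrite inE sS s_not_a.
have : cosetI I a \in imgI I T.
  by rewrite (eqP (S_least _)) ?TS ?T_gens //; apply/imsetP; exists a.
case/imsetP=> t; rewrite inE => /andP[_ t_not_a] a_t.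
by rewrite a_t eqxx in t_not_a.
Qed.

Lemma min_gens_mod_notin_xRI a b : a \in S -> b \in S -> cosetI I a != cosetI I b ->
  a \notin xRI b I.
Proof.
move=> aS bS ab; apply: contra (min_gens_mod_irredundant aS); apply/subsetP.
by apply: ideal_addSl; apply: ideal_genS; rewrite finset.sub1set inE bS eq_sym.
Qed.

Lemma min_gens_mod_vert a : m != [set: R] -> a \in S -> a \in GammaI_vert I.
Proof.
move=> m_neqT aS; rewrite inE; apply/andP; split.
  apply: contra (min_gens_mod_irredundant aS).
  exact/subsetP/sub_ideal_addr/ideal_gen_idl.
apply: contra m_neqT => /eqP xRI_T; rewrite eqEsubset finset.subsetT -xRI_T.
rewrite ideal_add_min ?ideal_gen_min // finset.sub1set.
exact: (subsetP min_gens_mod_sub).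
Qed.

Lemma min_gens_mod_clique : m != [set: R] ->
  exists K : {set R}, [/\ #|K| = #|imgI I S|, K \subset GammaI_vert I &
                       {in K &, forall x y, x != y -> GammaI_adj I x y}].
Proof.
move=> m_neqT; pose rep c := odflt 0 [pick s in S | cosetI I s == c].
have repP c : c \in imgI I S -> rep c \in S /\ cosetI I (rep c) = c.
  case/imsetP=> s sS ->; rewrite /rep; case: pickP => [t /andP[tS /eqP]|] //.
  by move/(_ s); rewrite sS eqxx.
exists [set rep c | c in imgI I S]; split.
- rewrite card_in_imset // => c c' /repP[_ cE] /repP[_ c'E] rep_eq.
  by rewrite -cE -c'E rep_eq.
- by apply/subsetP => _ /imsetP[c /repP[repS _] ->]; apply: min_gens_mod_vert.
move=> _ _ /imsetP[c /repP[repS repE] ->] /imsetP[c' /repP[repS' repE'] ->] rep_neq.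
have cc' : cosetI I (rep c) != cosetI I (rep c').
  by rewrite repE repE'; apply: contraNneq rep_neq => ->.
rewrite /GammaI_adj !min_gens_mod_vert // rep_neq.
by rewrite !min_gens_mod_notin_xRI // eq_sym.
Qed.

End MinimalGenerators.

Theorem proposition3p11 (R : finComNzRingType) (m I : {set R}) :
  local_with_max m ->
  ~ principal_ideal m ->
  proper_idl I ->
  planar (GammaI_vert I) (GammaI_adj I) ->
  (ara_mod I m <= 4)%N.
Proof.
move=> [[m_idl m_neqT] m_max] _ I_proper Gamma_planar.
have [I_idl _] := I_proper.
have Im : I \subset m := m_max I I_proper.
have [S S_min] := exists_min_gens_mod I_idl m_idl Im.
apply: leq_trans (ara_mod_le S_min) _.
have [K [<- K_vert K_clique]] := min_gens_mod_clique I_idl m_idl Im S_min m_neqT.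
exact: planar_clique_lt5 Gamma_planar K_vert K_clique.
Qed.
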